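(* Assume in addition that $G$ is commutative. Then there exists $C>0$ such that $C\,\|\nabla\phi(x)\|^{4/3}\ge\phi(x)$ for all $x\in\mathbb{R}^N$.
   Context: Let $G$ be a closed subgroup of $GL(N,\mathbb{R})$ invariant under transpose $g\mapsto g^{*}$, and $\mathfrak p=\{X\in\mathrm{Lie}(G):X^{*}=X\}$. Equip $M_N(\mathbb{R})$ with the inner product $\mathrm{tr}(XY^{*})$, let $X_1,\dots,X_n$ be an orthonormal basis of $\mathfrak p$, and set $\phi(x)=\sum_{i=1}^n\langle X_ix,x\rangle^2$ for $x\in\mathbb{R}^N$ (standard inner product), so that $\nabla\phi(x)=4\sum_i\langle X_ix,x\rangle X_ix$ ($\nabla$ the Euclidean gradient). *)

(* real matrices represented concretely as functions nat -> nat -> R,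
   only entries with indices < N being relevant. *)
From Stdlib Require Import Reals Lra Arith Factorial.
Open Scope R_scope.

Definition mat := nat -> nat -> R.
Definition vec := nat -> R.

Fixpoint rsum (n : nat) (f : nat -> R) : R :=
  match n with O => 0 | S k => rsum k f + f k end.

Definition meq (N : nat) (A B : mat) : Prop :=
  forall i j, (i < N)%nat -> (j < N)%nat -> A i j = B i j.

Definition mid : mat := fun i j => if Nat.eqb i j then 1 else 0.
Definition mmul (N : nat) (A B : mat) : mat :=
  fun i j => rsum N (fun k => A i k * B k j).
Definition mtr (A : mat) : mat := fun i j => A j i.
Definition mscale (t : R) (A : mat) : mat := fun i j => t * A i j.

Fixpoint mpow (N : nat) (A : mat) (k : nat) : mat :=
  match k with O => mid | S k' => mmul N (mpow N A k') A end.

Definition invertible (N : nat) (A : mat) : Prop :=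
  exists B, meq N (mmul N A B) mid /\ meq N (mmul N B A) mid.

Definition mexp_is (N : nat) (X E : mat) : Prop :=
  forall i j, (i < N)%nat -> (j < N)%nat ->
    Un_cv (fun m => sum_f_R0 (fun k => mpow N X k i j / INR (fact k)) m) (E i j).

Definition closed_subgroup_GL (N : nat) (G : mat -> Prop) : Prop :=
  (forall A B, G A -> meq N A B -> G B) /\
  (forall A, G A -> invertible N A) /\
  G mid /\
  (forall A B, G A -> G B -> G (mmul N A B)) /\
  (forall A, G A -> exists B, G B /\ meq N (mmul N A B) mid) /\
  (forall (s : nat -> mat) (A : mat), (forall k, G (s k)) ->
     (forall i j, (i < N)%nat -> (j < N)%nat -> Un_cv (fun k => s k i j) (A i j)) ->
     invertible N A -> G A).

Definition transpose_invariant (G : mat -> Prop) : Prop :=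
  forall A, G A -> G (mtr A).

Definition commutative_group (N : nat) (G : mat -> Prop) : Prop :=
  forall A B, G A -> G B -> meq N (mmul N A B) (mmul N B A).

Definition lie (N : nat) (G : mat -> Prop) (X : mat) : Prop :=
  forall t : R, exists E, mexp_is N (mscale t X) E /\ G E.

Definition pspace (N : nat) (G : mat -> Prop) (X : mat) : Prop :=
  lie N G X /\ meq N (mtr X) X.

(* <X, Y> = tr(X Y^T) *)
Definition mip (N : nat) (X Y : mat) : R :=
  rsum N (fun i => rsum N (fun j => X i j * Y i j)).

Definition orthonormal_basis (N : nat) (G : mat -> Prop) (n : nat) (Xs : nat -> mat) : Prop :=
  (forall i, (i < n)%nat -> pspace N G (Xs i)) /\
  (forall i j, (i < n)%nat -> (j < n)%nat ->
      mip N (Xs i) (Xs j) = if Nat.eqb i j then 1 else 0) /\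
  (forall Y, pspace N G Y -> exists c : nat -> R,
      meq N Y (fun a b => rsum n (fun i => c i * Xs i a b))).

Definition mapply (N : nat) (X : mat) (x : vec) : vec :=
  fun a => rsum N (fun b => X a b * x b).
Definition vip (N : nat) (x y : vec) : R := rsum N (fun a => x a * y a).
Definition vnorm (N : nat) (x : vec) : R := sqrt (vip N x x).

Definition phi (N n : nat) (Xs : nat -> mat) (x : vec) : R :=
  rsum n (fun i => (vip N (mapply N (Xs i) x) x) ^ 2).

Definition grad_phi (N n : nat) (Xs : nat -> mat) (x : vec) : vec :=
  fun a => 4 * rsum n (fun i => vip N (mapply N (Xs i) x) x * mapply N (Xs i) x a).

(* r^y for r >= 0 and y > 0, with the convention 0^y = 0 *)
Definition powr (r y : R) : R := if Rle_dec r 0 then 0 else Rpower r y.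

(* Commutativity of [G] makes the symmetric matrices [X_i] commute: [exp(t X_i)] and
   [exp(t X_j)] commute, and comparing their terms of order [t^2] gives [X_i X_j = X_j X_i].
   With [a_i(x) = <X_i x, x>] we have [phi(x) = |a(x)|^2] and [grad phi(x) = 4 S x] for
   [S = sum_i a_i(x) X_i].  For a symmetric [T], Cayley-Hamilton provides a polynomial [W] in
   [T] with [T = T^2 W]; then [T x = T W S x - (S - T) W T x], so every [S] commuting with [T]
   and close enough to it satisfies [<T x, x> <= K |S x|^2].  Near a unit vector [l] take
   [T = sum_i l_i X_i]: if [phi(x) = 1] and [a(x)] is close to [l], then [<T x, x> = <l, a(x)>]
   is close to [1], which bounds [|grad phi(x)|] from below.  Compactness of the unit sphere
   makes this bound uniform on [{phi = 1}], and homogeneity ([phi] has degree 4, [grad phi]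
   degree 3) gives [phi^3 <= K |grad phi|^4] everywhere. *)

From Stdlib Require Import Reals Lra Lia Arith Factorial Wf_nat ClassicalEpsilon Classical.
From mathcomp Require ssreflect ssrfun ssrbool ssrnat eqtype seq fintype bigop ssralg matrix poly mxpoly Rstruct.
Open Scope R_scope.
Set Bullet Behavior "Strict Subproofs".

Lemma rsum_ext n f g : (forall k, (k < n)%nat -> f k = g k) -> rsum n f = rsum n g.
Proof.
  induction n as [|n IH]; intros H; simpl; [reflexivity|].
  rewrite IH, H; [reflexivity|lia|intros; apply H; lia].
Qed.

Lemma rsum_plus n f g : rsum n (fun k => f k + g k) = rsum n f + rsum n g.
Proof. induction n; simpl; [ring|rewrite IHn; ring]. Qed.

Lemma rsum_minus n f g : rsum n (fun k => f k - g k) = rsum n f - rsum n g.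
Proof. induction n; simpl; [ring|rewrite IHn; ring]. Qed.

Lemma rsum_mult_l n c f : rsum n (fun k => c * f k) = c * rsum n f.
Proof. induction n; simpl; [ring|rewrite IHn; ring]. Qed.

Lemma rsum_mult_r n c f : rsum n (fun k => f k * c) = rsum n f * c.
Proof. induction n; simpl; [ring|rewrite IHn; ring]. Qed.

Lemma rsum_const n c : rsum n (fun _ => c) = INR n * c.
Proof. induction n; simpl rsum; [simpl; ring|rewrite IHn, S_INR; ring]. Qed.

Lemma rsum_0 n : rsum n (fun _ => 0) = 0.
Proof. rewrite rsum_const. ring. Qed.

Lemma rsum_eq0 n f : (forall k, (k < n)%nat -> f k = 0) -> rsum n f = 0.
Proof. intros H. rewrite <- (rsum_0 n). apply rsum_ext. exact H. Qed.

Lemma rsum_swap n m f :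
  rsum n (fun i => rsum m (fun j => f i j)) = rsum m (fun j => rsum n (fun i => f i j)).
Proof.
  induction n; simpl.
  - symmetry. apply rsum_0.
  - rewrite IHn, <- rsum_plus. reflexivity.
Qed.

Lemma rsum_app n m f : rsum (n + m) f = rsum n f + rsum m (fun k => f (n + k)%nat).
Proof.
  induction m; simpl; [rewrite Nat.add_0_r; ring|].
  rewrite Nat.add_succ_r. simpl. rewrite IHm. ring.
Qed.

Lemma rsum_Sn_l n f : rsum (S n) f = f O + rsum n (fun k => f (S k)).
Proof. induction n; simpl in *; [ring|rewrite IHn; ring]. Qed.

Lemma rsum_le n f g : (forall k, (k < n)%nat -> f k <= g k) -> rsum n f <= rsum n g.
Proof.
  induction n; simpl; intros H; [lra|].
  assert (f n <= g n) by (apply H; lia).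
  assert (rsum n f <= rsum n g) by (apply IHn; intros; apply H; lia).
  lra.
Qed.

Lemma rsum_nonneg n f : (forall k, (k < n)%nat -> 0 <= f k) -> 0 <= rsum n f.
Proof. intros H. rewrite <- (rsum_0 n). apply rsum_le. exact H. Qed.

Lemma rsum_Rabs n f : Rabs (rsum n f) <= rsum n (fun k => Rabs (f k)).
Proof.
  induction n; simpl; [rewrite Rabs_R0; lra|].
  eapply Rle_trans; [apply Rabs_triang|]. lra.
Qed.

Lemma rsum_ge_term n f k :
  (forall j, (j < n)%nat -> 0 <= f j) -> (k < n)%nat -> f k <= rsum n f.
Proof.
  induction n; intros H Hk; [lia|]. simpl.
  assert (0 <= f n) by (apply H; lia).
  destruct (Nat.eq_dec k n) as [->|Hne].
  - assert (0 <= rsum n f) by (apply rsum_nonneg; intros; apply H; lia). lra.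
  - assert (f k <= rsum n f) by (apply IHn; [intros; apply H|]; lia). lra.
Qed.

Lemma rsum_sqr_eq0 n f :
  rsum n (fun k => f k * f k) = 0 -> forall k, (k < n)%nat -> f k = 0.
Proof.
  intros H k Hk.
  assert (f k * f k <= rsum n (fun k => f k * f k))
    by (apply (rsum_ge_term n (fun k => f k * f k)); [intros; apply Rle_0_sqr|exact Hk]).
  nra.
Qed.

Lemma rsum_kronecker_l N a f :
  (a < N)%nat -> rsum N (fun b => (if Nat.eqb a b then 1 else 0) * f b) = f a.
Proof.
  induction N; intros Ha; [lia|]. simpl.
  destruct (Nat.eq_dec a N) as [->|Hne].
  - rewrite Nat.eqb_refl, rsum_eq0; [ring|].
    intros k Hk. destruct (Nat.eqb_spec N k); [lia|ring].
  - rewrite IHN by lia. destruct (Nat.eqb_spec a N); [lia|ring].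
Qed.

Lemma rsum_kronecker_r N b g :
  (b < N)%nat -> rsum N (fun l => g l * (if Nat.eqb l b then 1 else 0)) = g b.
Proof.
  intros Hb. rewrite <- (rsum_kronecker_l N b g Hb). apply rsum_ext. intros l _.
  rewrite (Nat.eqb_sym l b). ring.
Qed.

Lemma rsum_Cauchy_Schwarz n f g :
  (rsum n (fun k => f k * g k)) ^ 2 <=
  rsum n (fun k => f k * f k) * rsum n (fun k => g k * g k).
Proof.
  induction n; simpl; [lra|].
  set (A := rsum n (fun k => f k * g k)) in *.
  set (F := rsum n (fun k => f k * f k)) in *.
  set (G := rsum n (fun k => g k * g k)) in *.
  assert (0 <= F) by (apply rsum_nonneg; intros; apply Rle_0_sqr).
  assert (0 <= G) by (apply rsum_nonneg; intros; apply Rle_0_sqr).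
  set (a := f n) in *. set (b := g n) in *.
  (* the cross term [2 A a b] is controlled by AM-GM through [A^2 <= F G] *)
  assert (0 <= (F*b*b - G*a*a)^2) by apply pow2_ge_0.
  assert (0 <= (a*a)*(b*b)) by (apply Rmult_le_pos; apply Rle_0_sqr).
  assert (A^2*((a*a)*(b*b)) <= F*G*((a*a)*(b*b)))
    by (apply Rmult_le_compat_r; simpl in IHn; lra).
  assert (Hsq : (2*A*a*b)^2 <= (F*b*b + G*a*a)^2) by nra.
  assert (0 <= F*b*b + G*a*a) by nra.
  assert (2*A*a*b <= F*b*b + G*a*a).
  { destruct (Rle_dec (2*A*a*b) 0); [lra|]. nra. }
  simpl in IHn. nra.
Qed.

Lemma rsum_cv n (f : nat -> nat -> R) (l : nat -> R) :
  (forall i, (i < n)%nat -> Un_cv (fun k => f k i) (l i)) ->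
  Un_cv (fun k => rsum n (f k)) (rsum n l).
Proof.
  induction n; intros H; simpl.
  - intros eps He. exists O. intros. unfold Rdist. rewrite Rminus_0_r, Rabs_R0. lra.
  - apply CV_plus; [apply IHn; intros|]; apply H; lia.
Qed.

Definition vnorm2 N (y : vec) : R := vip N y y.
Definition mnorm2 N (M : mat) : R := rsum N (fun a => rsum N (fun b => M a b * M a b)).
Definition msub (S T : mat) : mat := fun p q => S p q - T p q.
Definition lincomb n (c : nat -> R) (Xs : nat -> mat) : mat :=
  fun p q => rsum n (fun i => c i * Xs i p q).
Definition msym N (T : mat) : Prop := meq N (mtr T) T.
Definition commutes N (S T : mat) : Prop :=
  forall x a, (a < N)%nat -> mapply N S (mapply N T x) a = mapply N T (mapply N S x) a.

Lemma vnorm2_nonneg N y : 0 <= vnorm2 N y.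
Proof. apply rsum_nonneg. intros. apply Rle_0_sqr. Qed.

Lemma mnorm2_nonneg N M : 0 <= mnorm2 N M.
Proof. apply rsum_nonneg. intros. apply rsum_nonneg. intros. apply Rle_0_sqr. Qed.

Lemma vnorm2_eq0 N y : vnorm2 N y = 0 -> forall a, (a < N)%nat -> y a = 0.
Proof. apply rsum_sqr_eq0. Qed.

Lemma vip_ext N u u' v v' :
  (forall a, (a < N)%nat -> u a = u' a) -> (forall a, (a < N)%nat -> v a = v' a) ->
  vip N u v = vip N u' v'.
Proof. intros Hu Hv. apply rsum_ext. intros. rewrite Hu, Hv by assumption. reflexivity. Qed.

Lemma vip_comm N u v : vip N u v = vip N v u.
Proof. apply rsum_ext. intros; ring. Qed.

Lemma vip_le_half N u v : vip N u v <= (vnorm2 N u + vnorm2 N v) / 2.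
Proof.
  unfold vnorm2, vip, Rdiv. rewrite <- rsum_plus, <- rsum_mult_r.
  apply rsum_le. intros k _. pose proof (Rle_0_sqr (u k - v k)). unfold Rsqr in *. lra.
Qed.

Lemma vnorm2_sub_le N u v :
  vnorm2 N (fun a => u a - v a) <= 2 * vnorm2 N u + 2 * vnorm2 N v.
Proof.
  unfold vnorm2, vip. rewrite <- !rsum_mult_l, <- rsum_plus.
  apply rsum_le. intros k _. pose proof (Rle_0_sqr (u k + v k)). unfold Rsqr in *. lra.
Qed.

Lemma vnorm2_scal N t v : vnorm2 N (fun a => t * v a) = t ^ 2 * vnorm2 N v.
Proof. unfold vnorm2, vip. rewrite <- rsum_mult_l. apply rsum_ext. intros. ring. Qed.

Lemma mapply_ext N M x y :
  (forall b, (b < N)%nat -> x b = y b) -> forall a, mapply N M x a = mapply N M y a.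
Proof. intros H a. apply rsum_ext. intros. rewrite H by assumption. reflexivity. Qed.

Lemma vnorm2_mapply_le N M x : vnorm2 N (mapply N M x) <= mnorm2 N M * vnorm2 N x.
Proof.
  unfold vnorm2, vip, mnorm2. rewrite <- rsum_mult_r. apply rsum_le. intros a _.
  pose proof (rsum_Cauchy_Schwarz N (fun b => M a b) x). simpl in *. unfold mapply. lra.
Qed.

Lemma mapply_mmul N A B x a : mapply N (mmul N A B) x a = mapply N A (mapply N B x) a.
Proof.
  unfold mapply, mmul.
  transitivity (rsum N (fun b => rsum N (fun k => A a k * (B k b * x b)))).
  { apply rsum_ext. intros. rewrite <- rsum_mult_r. apply rsum_ext. intros. ring. }
  rewrite rsum_swap. apply rsum_ext. intros. apply rsum_mult_l.
Qed.

Lemma mapply_rsum N M m (d : nat -> R) (v : nat -> vec) a :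
  mapply N M (fun b => rsum m (fun j => d j * v j b)) a =
  rsum m (fun j => d j * mapply N M (v j) a).
Proof.
  unfold mapply.
  transitivity (rsum N (fun b => rsum m (fun j => d j * (M a b * v j b)))).
  { apply rsum_ext. intros. rewrite <- rsum_mult_l. apply rsum_ext. intros. ring. }
  rewrite rsum_swap. apply rsum_ext. intros. apply rsum_mult_l.
Qed.

Lemma mapply_plus N M u v a :
  mapply N M (fun b => u b + v b) a = mapply N M u a + mapply N M v a.
Proof. unfold mapply. rewrite <- rsum_plus. apply rsum_ext. intros; ring. Qed.

Lemma mapply_minus N M u v a :
  mapply N M (fun b => u b - v b) a = mapply N M u a - mapply N M v a.
Proof. unfold mapply. rewrite <- rsum_minus. apply rsum_ext. intros; ring. Qed.

Lemma mapply_scal N M c u a : mapply N M (fun b => c * u b) a = c * mapply N M u a.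
Proof. unfold mapply. rewrite <- rsum_mult_l. apply rsum_ext. intros; ring. Qed.

Lemma mapply_lincomb N n c Xs x a :
  mapply N (lincomb n c Xs) x a = rsum n (fun i => c i * mapply N (Xs i) x a).
Proof.
  unfold mapply, lincomb.
  transitivity (rsum N (fun b => rsum n (fun i => c i * (Xs i a b * x b)))).
  { apply rsum_ext. intros. rewrite <- rsum_mult_r. apply rsum_ext. intros. ring. }
  rewrite rsum_swap. apply rsum_ext. intros. apply rsum_mult_l.
Qed.

Lemma mapply_msub N S T x a : mapply N (msub S T) x a = mapply N S x a - mapply N T x a.
Proof. unfold mapply, msub. rewrite <- rsum_minus. apply rsum_ext. intros; ring. Qed.

Lemma mapply_mid N x a : (a < N)%nat -> mapply N mid x a = x a.
Proof. apply rsum_kronecker_l. Qed.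

Lemma mapply_mpow N T k x a :
  (a < N)%nat -> mapply N (mpow N T k) x a = Nat.iter k (mapply N T) x a.
Proof.
  revert x a. induction k; intros x a Ha; simpl.
  - apply mapply_mid, Ha.
  - rewrite mapply_mmul, IHk, Nat.iter_swap by exact Ha. reflexivity.
Qed.

Lemma vip_rsum_l N m (d : nat -> R) (v : nat -> vec) w :
  vip N (fun a => rsum m (fun j => d j * v j a)) w = rsum m (fun j => d j * vip N (v j) w).
Proof.
  unfold vip.
  transitivity (rsum N (fun a => rsum m (fun j => d j * (v j a * w a)))).
  { apply rsum_ext. intros. rewrite <- rsum_mult_r. apply rsum_ext. intros. ring. }
  rewrite rsum_swap. apply rsum_ext. intros. apply rsum_mult_l.
Qed.

Lemma vip_mapply_sym N T u v : msym N T -> vip N (mapply N T u) v = vip N u (mapply N T v).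
Proof.
  intros HT. unfold vip, mapply.
  transitivity (rsum N (fun a => rsum N (fun b => u b * (T a b * v a)))).
  { apply rsum_ext. intros. rewrite <- rsum_mult_r. apply rsum_ext. intros. ring. }
  rewrite rsum_swap. apply rsum_ext. intros b Hb. rewrite <- rsum_mult_l.
  apply rsum_ext. intros a Ha. rewrite <- (HT b a Hb Ha). unfold mtr. ring.
Qed.

Lemma commutes_of_meq N S T : meq N (mmul N S T) (mmul N T S) -> commutes N S T.
Proof.
  intros H x a Ha. rewrite <- !mapply_mmul. apply rsum_ext. intros b Hb.
  rewrite (H a b Ha Hb). reflexivity.
Qed.

Lemma commutes_iter N S T k x a :
  commutes N S T -> (a < N)%nat ->
  mapply N S (Nat.iter k (mapply N T) x) a = Nat.iter k (mapply N T) (mapply N S x) a.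
Proof.
  intros HS. revert a. induction k; intros a Ha; simpl; [reflexivity|].
  rewrite HS by exact Ha. apply mapply_ext. intros b Hb. apply IHk, Hb.
Qed.

Lemma iter_mapply_rsum N T k m (d : nat -> R) (z : nat -> vec) a :
  Nat.iter k (mapply N T) (fun b => rsum m (fun j => d j * z j b)) a =
  rsum m (fun j => d j * Nat.iter k (mapply N T) (z j) a).
Proof.
  revert a. induction k; intros a; simpl; [reflexivity|].
  rewrite <- mapply_rsum. apply mapply_ext. intros. apply IHk.
Qed.

(** * A relative inverse of a symmetric matrix *)

Module CayleyHamilton.
Import ssreflect ssrfun ssrbool ssrnat eqtype seq fintype bigop ssralg matrix poly mxpoly Rstruct.
Import GRing.Theory.
Local Open Scope ring_scope.

Lemma rsum_big (n : nat) (f : nat -> R) : rsum n f = \sum_(j < n) f j.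
Proof. by elim: n => [|n IH] /=; rewrite ?big_ord0 // big_ord_recr /= IH. Qed.

Lemma mpow_char_poly (N : nat) (T : mat) : exists c : nat -> R, c N = 1 /\
  forall a b, (a < N)%coq_nat -> (b < N)%coq_nat ->
    rsum N.+1 (fun k => c k * mpow N T k a b) = 0.
Proof.
case: N => [|n]; first by exists (fun _ => 1); split => // a b /leP.
pose A : 'M[R]_n.+1 := \matrix_(i, j) T i j.
have mpowE k (i j : 'I_n.+1) : (A ^+ k) i j = mpow n.+1 T k i j.
  elim: k i j => [|k IH] i j.
    rewrite expr0 mxE /= /mid; case: (eqVneq i j) => [->|Hij]; first by rewrite Nat.eqb_refl.
    by case: (Nat.eqb_spec i j) => // /val_inj Eij; rewrite Eij eqxx in Hij.
  by rewrite exprSr mxE /= /mmul rsum_big; apply: eq_bigr => l _; rewrite IH mxE.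
pose p := char_poly A.
exists (fun k => p`_k); split.
  have := char_poly_monic A; rewrite /monic -/p => /eqP <-.
  by rewrite lead_coefE size_char_poly.
move=> a b /leP Ha /leP Hb.
have pA0 : \sum_(k < size p) p`_k *: A ^+ k = 0.
  have := Cayley_Hamilton A; rewrite -/p -{1}[p]coefK poly_def linear_sum /= => pA0.
  by rewrite -{}[RHS]pA0; apply: eq_bigr => k _; rewrite linearZ /= rmorphXn /= horner_mx_X.
rewrite rsum_big -(size_char_poly A) -/p.
transitivity ((\sum_(k < size p) p`_k *: A ^+ k) (Ordinal Ha) (Ordinal Hb)).
  by rewrite summxE; apply: eq_bigr => k _; rewrite mxE mpowE.
by rewrite pA0 mxE.
Qed.
End CayleyHamilton.

Lemma iter_char_poly N T : exists c : nat -> R, c N = 1 /\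
  forall x a, (a < N)%nat -> rsum (S N) (fun k => c k * Nat.iter k (mapply N T) x a) = 0.
Proof.
  destruct (CayleyHamilton.mpow_char_poly N T) as [c [HcN Hc]].
  exists c. split; [exact HcN|]. intros x a Ha.
  transitivity (rsum (S N) (fun k => rsum N (fun b => c k * mpow N T k a b * x b))).
  - apply rsum_ext. intros k _. rewrite <- mapply_mpow by exact Ha.
    unfold mapply. rewrite <- rsum_mult_l. apply rsum_ext. intros. ring.
  - rewrite rsum_swap. apply rsum_eq0. intros b Hb.
    rewrite rsum_mult_r, Hc by assumption. apply Rmult_0_l.
Qed.

Section RelativeInverse.
Variables (N : nat) (T : mat).
Hypothesis HT : msym N T.

Local Notation pw k x := (Nat.iter k (mapply N T) x).

(* For symmetric [T], [T^(k+2) y = 0] forces [|T^(k+1) y|^2 = <T^k y, T^(k+2) y> = 0]. *)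
Lemma iter_sym_kernel k y :
  (forall a, (a < N)%nat -> pw (S k) y a = 0) ->
  forall a, (a < N)%nat -> mapply N T y a = 0.
Proof.
  revert y. induction k as [|k IH]; intros y Hy; [exact Hy|].
  apply IH, vnorm2_eq0. unfold vnorm2.
  change (pw (S k) y) with (mapply N T (pw k y)) at 1.
  rewrite vip_mapply_sym by exact HT.
  rewrite (vip_ext N _ (pw k y) _ (fun _ => 0)) by (trivial; exact Hy).
  apply rsum_eq0. intros. ring.
Qed.

(* If [T^r q(T) = 0] with [q(0) <> 0], symmetry lowers [r] to [1]: [T q(T) = 0]. *)
Lemma lowest_order_relation (c : nat -> R) r y a :
  (forall x a, (a < N)%nat -> rsum (S N) (fun k => c k * pw k x a) = 0) ->
  (forall k, (k < r)%nat -> c k = 0) -> (r <= N)%nat -> (a < N)%nat ->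
  c r * mapply N T y a + rsum (N - r) (fun j => c (r + S j)%nat * pw (S (S j)) y a) = 0.
Proof.
  intros Hc Hlow HrN Ha.
  set (Q := fun b => rsum (S (N - r)) (fun j => c (r + j)%nat * pw j y b)).
  assert (HQ : forall a, (a < N)%nat -> pw r Q a = 0).
  { intros a' Ha'. rewrite <- (Hc y a' Ha').
    replace (S N) with (r + S (N - r))%nat by lia.
    rewrite rsum_app, (rsum_eq0 r) by (intros k Hk; rewrite Hlow by exact Hk; ring).
    rewrite Rplus_0_l. unfold Q. rewrite iter_mapply_rsum.
    apply rsum_ext. intros. rewrite Nat.iter_add. reflexivity. }
  assert (HTQ : mapply N T Q a = 0).
  { destruct r as [|k].
    - apply rsum_eq0. intros b Hb. change (Q b) with (pw 0 Q b). rewrite HQ by exact Hb. ring.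
    - exact (iter_sym_kernel k Q HQ a Ha). }
  unfold Q in HTQ. rewrite mapply_rsum, rsum_Sn_l, Nat.add_0_r in HTQ. exact HTQ.
Qed.

(* With [q(T) = q(0) + T q'(T)], the relation [T q(T) = 0] reads [T = T^2 W] for
   [W = - q'(T) / q(0)], a polynomial in [T]. *)
Lemma relative_inverse : exists W : mat,
  (forall y a, (a < N)%nat -> mapply N T y a = mapply N T (mapply N T (mapply N W y)) a) /\
  (forall A, commutes N A T -> commutes N A W).
Proof.
  destruct (iter_char_poly N T) as [c [HcN Hc]].
  destruct (dec_inh_nat_subset_has_unique_least_element (fun k => c k <> 0))
    as [r [[Hcr Hr] _]].
  { intros k. destruct (Req_dec (c k) 0); tauto. }
  { exists N. rewrite HcN. lra. }
  assert (HrN : (r <= N)%nat) by (apply Hr; rewrite HcN; lra).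
  assert (Hlow : forall k, (k < r)%nat -> c k = 0).
  { intros k Hk. destruct (Req_dec (c k) 0) as [|Hk0]; [assumption|].
    specialize (Hr k Hk0). lia. }
  set (M := (N - r)%nat).
  set (d := fun j => - c (r + S j)%nat / c r).
  exists (lincomb M d (mpow N T)).
  assert (HW : forall y a, (a < N)%nat ->
    mapply N (lincomb M d (mpow N T)) y a = rsum M (fun j => d j * pw j y a)).
  { intros y a Ha. rewrite mapply_lincomb. apply rsum_ext. intros.
    rewrite mapply_mpow by exact Ha. reflexivity. }
  split.
  - intros y a Ha.
    pose proof (lowest_order_relation c r y a Hc Hlow HrN Ha) as Hrel. fold M in Hrel.
    rewrite (mapply_ext N T (mapply N T (mapply N (lincomb M d (mpow N T)) y))
               (fun b => rsum M (fun j => d j * pw (S j) y b))).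
    2: { intros b Hb. rewrite (mapply_ext N T _ _ (HW y)), mapply_rsum. reflexivity. }
    rewrite mapply_rsum. unfold d.
    transitivity (- / c r * rsum M (fun j => c (r + S j)%nat * pw (S (S j)) y a)).
    + set (s := rsum M _) in Hrel |- *.
      transitivity (/ c r * (c r * mapply N T y a)); [field; exact Hcr|].
      replace (c r * mapply N T y a) with (- s) by lra. ring.
    + rewrite <- rsum_mult_l. apply rsum_ext. intros j _.
      change (pw (S (S j)) y a) with (mapply N T (fun b => pw (S j) y b) a).
      field. exact Hcr.
  - intros A HA x a Ha.
    rewrite (mapply_ext N A _ (fun b => rsum M (fun j => d j * pw j x b))) by exact (HW x).
    rewrite mapply_rsum, HW by exact Ha. apply rsum_ext. intros.
    rewrite commutes_iter by assumption. reflexivity.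
Qed.

End RelativeInverse.

Lemma commutes_refl N T : commutes N T T.
Proof. intros x a _. reflexivity. Qed.

Lemma commutes_msub N S T : commutes N S T -> commutes N (msub S T) T.
Proof.
  intros HS x a Ha. rewrite !mapply_msub, HS, <- mapply_minus by exact Ha.
  apply mapply_ext. intros. rewrite mapply_msub. reflexivity.
Qed.

Section Perturbation.
Variables (N : nat) (T W : mat).
Hypothesis HT : msym N T.
Hypothesis HTW : forall y a, (a < N)%nat -> mapply N T y a = mapply N T (mapply N T (mapply N W y)) a.
Hypothesis HWcomm : forall A, commutes N A T -> commutes N A W.

Lemma mapply_TW y a : (a < N)%nat ->
  mapply N T (mapply N W y) a = mapply N W (mapply N T y) a.
Proof. apply (HWcomm T (commutes_refl N T)). Qed.

Lemma mapply_TW_T y a : (a < N)%nat -> mapply N T (mapply N W (mapply N T y)) a = mapply N T y a.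
Proof.
  intros Ha. rewrite (HTW y a Ha). apply mapply_ext. intros b Hb.
  symmetry. apply mapply_TW, Hb.
Qed.

Lemma mapply_T_decomp S x a : commutes N S T -> (a < N)%nat ->
  mapply N T x a =
  mapply N T (mapply N W (mapply N S x)) a - mapply N (msub S T) (mapply N W (mapply N T x)) a.
Proof.
  intros HS Ha.
  assert (HD := commutes_msub N S T HS).
  assert (HSx : forall b, (b < N)%nat -> mapply N S x b = mapply N T x b + mapply N (msub S T) x b)
    by (intros; rewrite mapply_msub; ring).
  assert (E : forall b, (b < N)%nat -> mapply N W (mapply N S x) b =
      mapply N W (mapply N T x) b + mapply N W (mapply N (msub S T) x) b).
  { intros b _. rewrite (mapply_ext N W _ _ HSx). apply mapply_plus. }
  rewrite (mapply_ext N T _ _ E), mapply_plus, mapply_TW_T by exact Ha.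
  assert (mapply N T (mapply N W (mapply N (msub S T) x)) a =
          mapply N (msub S T) (mapply N W (mapply N T x)) a).
  { rewrite (mapply_ext N T _ (mapply N (msub S T) (mapply N W x)))
      by (intros; symmetry; apply (HWcomm _ HD); assumption).
    rewrite <- HD by exact Ha. apply mapply_ext. exact (mapply_TW x). }
  lra.
Qed.

Lemma vnorm2_T_le S x : commutes N S T -> mnorm2 N (msub S T) * mnorm2 N W <= / 4 ->
  vnorm2 N (mapply N T x) <= 4 * (mnorm2 N T * mnorm2 N W) * vnorm2 N (mapply N S x).
Proof.
  intros HS Hsmall.
  set (u := mapply N T x). set (v := mapply N S x).
  assert (Hdecomp : vnorm2 N u =
    vnorm2 N (fun a => mapply N T (mapply N W v) a - mapply N (msub S T) (mapply N W u) a)).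
  { apply vip_ext; intros; apply mapply_T_decomp; assumption. }
  pose proof (vnorm2_mapply_le N T (mapply N W v)). pose proof (vnorm2_mapply_le N W v).
  pose proof (vnorm2_mapply_le N (msub S T) (mapply N W u)). pose proof (vnorm2_mapply_le N W u).
  pose proof (vnorm2_sub_le N (mapply N T (mapply N W v)) (mapply N (msub S T) (mapply N W u))).
  pose proof (mnorm2_nonneg N T). pose proof (mnorm2_nonneg N W).
  pose proof (mnorm2_nonneg N (msub S T)).
  pose proof (vnorm2_nonneg N u). pose proof (vnorm2_nonneg N v).
  pose proof (vnorm2_nonneg N (mapply N W u)). pose proof (vnorm2_nonneg N (mapply N W v)).
  set (fT := mnorm2 N T) in *. set (fW := mnorm2 N W) in *. set (fD := mnorm2 N (msub S T)) in *.
  assert (fT * vnorm2 N (mapply N W v) <= fT * (fW * vnorm2 N v)) by (apply Rmult_le_compat_l; lra).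
  assert (fD * vnorm2 N (mapply N W u) <= fD * (fW * vnorm2 N u)) by (apply Rmult_le_compat_l; lra).
  assert (fD * fW * vnorm2 N u <= / 4 * vnorm2 N u) by (apply Rmult_le_compat_r; lra).
  nra.
Qed.

Lemma vip_T_le x : vip N (mapply N T x) x <= (mnorm2 N W + 1) / 2 * vnorm2 N (mapply N T x).
Proof.
  set (u := mapply N T x).
  assert (E : vip N u x = vip N (mapply N W u) u).
  { rewrite (vip_ext N u (mapply N T (mapply N T (mapply N W x))) x x) by (trivial || apply HTW).
    rewrite vip_mapply_sym by exact HT. apply vip_ext; [|trivial].
    intros. apply mapply_TW. assumption. }
  rewrite E. eapply Rle_trans; [apply vip_le_half|].
  pose proof (vnorm2_mapply_le N W u). lra.
Qed.

End Perturbation.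

Lemma quadratic_form_perturbation N T : msym N T -> exists del K, del > 0 /\ K > 0 /\
  forall S, commutes N S T -> mnorm2 N (msub S T) <= del ->
  forall x, vip N (mapply N T x) x <= K * vnorm2 N (mapply N S x).
Proof.
  intros HT. destruct (relative_inverse N T HT) as [W [HTW HWcomm]].
  pose proof (mnorm2_nonneg N W) as HfW. pose proof (mnorm2_nonneg N T) as HfT.
  exists (/ (4 * (mnorm2 N W + 1))), ((mnorm2 N W + 1) / 2 * (4 * (mnorm2 N T * mnorm2 N W) + 1)).
  split; [apply Rinv_0_lt_compat; lra|]. split; [apply Rmult_lt_0_compat; nra|].
  intros S HS Hdel x.
  assert (Hsmall : mnorm2 N (msub S T) * mnorm2 N W <= / 4).
  { apply Rle_trans with (/ (4 * (mnorm2 N W + 1)) * mnorm2 N W); [apply Rmult_le_compat_r; lra|].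
    apply (Rmult_le_reg_l (4 * (mnorm2 N W + 1))); [lra|]. field_simplify; lra. }
  pose proof (vnorm2_T_le N T W HTW HWcomm S x HS Hsmall).
  pose proof (vip_T_le N T W HT HTW HWcomm x).
  pose proof (vnorm2_nonneg N (mapply N S x)).
  pose proof (vnorm2_nonneg N (mapply N T x)).
  set (fW := mnorm2 N W) in *. set (fT := mnorm2 N T) in *.
  assert (0 <= fT * fW) by (apply Rmult_le_pos; lra).
  nra.
Qed.

(** * The Lie algebra of a commutative group *)

Definition mnorm1 N (M : mat) : R := rsum N (fun a => rsum N (fun b => Rabs (M a b))).

Lemma mnorm1_nonneg N M : 0 <= mnorm1 N M.
Proof. apply rsum_nonneg. intros. apply rsum_nonneg. intros. apply Rabs_pos. Qed.

Lemma mnorm1_mscale N t X : mnorm1 N (mscale t X) = Rabs t * mnorm1 N X.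
Proof.
  unfold mnorm1, mscale. rewrite <- rsum_mult_l. apply rsum_ext. intros.
  rewrite <- rsum_mult_l. apply rsum_ext. intros. apply Rabs_mult.
Qed.

Lemma Rabs_entry_le_mnorm1 N M a b :
  (a < N)%nat -> (b < N)%nat -> Rabs (M a b) <= mnorm1 N M.
Proof.
  intros Ha Hb. apply Rle_trans with (rsum N (fun b => Rabs (M a b))).
  - apply (rsum_ge_term N (fun b => Rabs (M a b))); [intros; apply Rabs_pos|exact Hb].
  - apply (rsum_ge_term N (fun a => rsum N (fun b => Rabs (M a b)))); [|exact Ha].
    intros. apply rsum_nonneg. intros. apply Rabs_pos.
Qed.

Lemma Rabs_column_le_mnorm1 N M b :
  (b < N)%nat -> rsum N (fun l => Rabs (M l b)) <= mnorm1 N M.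
Proof.
  intros Hb. unfold mnorm1. rewrite rsum_swap.
  apply (rsum_ge_term N (fun b => rsum N (fun a => Rabs (M a b)))); [|exact Hb].
  intros. apply rsum_nonneg. intros. apply Rabs_pos.
Qed.

Lemma Rabs_mpow_le N M k a b :
  (a < N)%nat -> (b < N)%nat -> Rabs (mpow N M k a b) <= mnorm1 N M ^ k.
Proof.
  revert a b. induction k; intros a b Ha Hb; simpl.
  - unfold mid. destruct (Nat.eqb a b); rewrite ?Rabs_R1, ?Rabs_R0; lra.
  - unfold mmul. eapply Rle_trans; [apply rsum_Rabs|].
    apply Rle_trans with (rsum N (fun l => mnorm1 N M ^ k * Rabs (M l b))).
    + apply rsum_le. intros l Hl. rewrite Rabs_mult.
      apply Rmult_le_compat_r; [apply Rabs_pos|apply IHk; assumption].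
    + rewrite rsum_mult_l, Rmult_comm. apply Rmult_le_compat_r.
      * apply pow_le, mnorm1_nonneg.
      * apply Rabs_column_le_mnorm1, Hb.
Qed.

Lemma Un_cv_Rabs_le u l c K :
  Un_cv u l -> (forall m, Rabs (u (S m) - c) <= K) -> Rabs (l - c) <= K.
Proof.
  intros Hu Hb. destruct (Rle_dec (Rabs (l - c)) K) as [|Hn]; [assumption|]. exfalso.
  destruct (Hu (Rabs (l - c) - K)) as [m0 Hm0]; [lra|].
  specialize (Hm0 (S m0) ltac:(lia)). unfold Rdist in Hm0. specialize (Hb m0).
  assert (Rabs (l - c) <= Rabs (u (S m0) - c) + Rabs (u (S m0) - l)).
  { replace (l - c) with ((u (S m0) - c) - (u (S m0) - l)) by ring.
    eapply Rle_trans; [apply Rabs_triang|]. rewrite Rabs_Ropp. lra. }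
  lra.
Qed.

Lemma sum_f_R0_tail_le (f : nat -> R) s : 0 <= s <= / 2 -> (forall k, Rabs (f k) <= s ^ k) ->
  forall m, Rabs (sum_f_R0 f (S m) - f O - f 1%nat) <= 2 * s ^ 2.
Proof.
  intros Hs Hf m.
  (* geometric tail: [sum_(2 <= k <= m+1) s^k <= 2 s^2 - 2 s^(m+2)] *)
  assert (Hgeo : Rabs (sum_f_R0 f (S m) - f O - f 1%nat) <= 2 * s ^ 2 - 2 * s ^ (m + 2)).
  { induction m.
    - simpl. replace (f 0%nat + f 1%nat - f 0%nat - f 1%nat) with 0 by ring.
      rewrite Rabs_R0. lra.
    - change (sum_f_R0 f (S (S m))) with (sum_f_R0 f (S m) + f (S (S m))).
      replace (sum_f_R0 f (S m) + f (S (S m)) - f 0%nat - f 1%nat)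
        with ((sum_f_R0 f (S m) - f 0%nat - f 1%nat) + f (S (S m))) by ring.
      eapply Rle_trans; [apply Rabs_triang|].
      pose proof (Hf (S (S m))) as Hm.
      replace (s ^ S (S m)) with (s ^ (m + 2)) in Hm by (f_equal; lia).
      replace (S m + 2)%nat with (S (m + 2)) by lia.
      change (s ^ S (m + 2)) with (s * s ^ (m + 2)).
      assert (0 <= s ^ (m + 2)) by (apply pow_le; lra).
      assert (s * s ^ (m + 2) <= / 2 * s ^ (m + 2)) by (apply Rmult_le_compat_r; lra).
      lra. }
  assert (0 <= s ^ (m + 2)) by (apply pow_le; lra). lra.
Qed.

Lemma mexp_second_order N X t mu E a b :
  (a < N)%nat -> (b < N)%nat -> 0 <= t -> mnorm1 N X <= mu -> t * mu <= / 2 ->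
  mexp_is N (mscale t X) E -> Rabs (E a b - mid a b - t * X a b) <= 2 * (t * mu) ^ 2.
Proof.
  intros Ha Hb Ht HX Hs HE.
  pose proof (mnorm1_nonneg N X).
  assert (Hst : 0 <= t * mu <= / 2) by (split; [apply Rmult_le_pos|]; lra).
  set (f := fun k => mpow N (mscale t X) k a b / INR (fact k)).
  assert (Hf : forall k, Rabs (f k) <= (t * mu) ^ k).
  { intros k. unfold f, Rdiv. rewrite Rabs_mult.
    assert (1 <= INR (fact k)) by (apply (le_INR 1), lt_O_fact).
    rewrite Rabs_inv, (Rabs_pos_eq (INR (fact k))) by lra.
    assert (Rabs (mpow N (mscale t X) k a b) <= (t * mu) ^ k).
    { eapply Rle_trans; [apply Rabs_mpow_le; assumption|].
      rewrite mnorm1_mscale, Rabs_pos_eq by exact Ht. apply pow_incr.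
      split; [apply Rmult_le_pos|apply Rmult_le_compat_l]; lra. }
    assert (/ INR (fact k) <= 1) by (rewrite <- Rinv_1; apply Rinv_le_contravar; lra).
    assert (0 < / INR (fact k)) by (apply Rinv_0_lt_compat; lra).
    pose proof (Rabs_pos (mpow N (mscale t X) k a b)). nra. }
  assert (F0 : f O = mid a b) by (unfold f; simpl; field).
  assert (F1 : f 1%nat = t * X a b).
  { unfold f. simpl. unfold mmul, mid.
    rewrite (rsum_kronecker_l N a (fun l => mscale t X l b)) by exact Ha. unfold mscale. field. }
  replace (E a b - mid a b - t * X a b) with (E a b - (f O + f 1%nat)) by (rewrite F0, F1; ring).
  apply Un_cv_Rabs_le with (u := sum_f_R0 f); [apply HE; assumption|].
  intros m. replace (sum_f_R0 f (S m) - (f 0%nat + f 1%nat))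
    with (sum_f_R0 f (S m) - f 0%nat - f 1%nat) by ring.
  apply sum_f_R0_tail_le; [exact Hst|exact Hf].
Qed.

Lemma Rabs_mult_le x y p q : Rabs x <= p -> Rabs y <= q -> Rabs (x * y) <= p * q.
Proof.
  intros Hx Hy. rewrite Rabs_mult.
  apply Rmult_le_compat; [apply Rabs_pos|apply Rabs_pos|assumption|assumption].
Qed.

(* Entrywise, [E = I + tX + O(rho)] and [F = I + tY + O(rho)]; the constant and first-order
   parts of [EF - FE] cancel, leaving [t^2 (XY - YX)] up to [O(t mu rho + rho^2)]. *)
Lemma commutator_second_order N X Y E F t mu rho a b :
  (a < N)%nat -> (b < N)%nat -> 0 <= t ->
  meq N (mmul N E F) (mmul N F E) ->
  (forall i j, (i < N)%nat -> (j < N)%nat -> Rabs (X i j) <= mu /\ Rabs (Y i j) <= mu) ->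
  (forall i j, (i < N)%nat -> (j < N)%nat ->
     Rabs (E i j - mid i j - t * X i j) <= rho /\ Rabs (F i j - mid i j - t * Y i j) <= rho) ->
  t ^ 2 * Rabs (mmul N X Y a b - mmul N Y X a b) <= INR N * (4 * t * mu * rho + 2 * (rho * rho)).
Proof.
  intros Ha Hb Ht HEF HXY HEF2.
  set (e := fun i j => E i j - mid i j - t * X i j).
  set (f := fun i j => F i j - mid i j - t * Y i j).
  set (cm := fun l =>
    (t * X a l + e a l) * (t * Y l b + f l b) - (t * Y a l + f a l) * (t * X l b + e l b)).
  set (rest := fun l => t * X a l * f l b + t * Y l b * e a l + e a l * f l b
                        - (t * Y a l * e l b + t * X l b * f a l + f a l * e l b)).
  assert (Hcomm : rsum N cm = 0).
  { pose proof (HEF a b Ha Hb) as H. unfold mmul in H.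
    apply Rminus_diag_eq in H. rewrite <- H, <- rsum_minus.
    transitivity (rsum N (fun l => (E a l * F l b - F a l * E l b)
                                 - (mid a l * (F l b - E l b) + (E a l - F a l) * mid l b))).
    { apply rsum_ext. intros. unfold cm, e, f. ring. }
    rewrite rsum_minus, rsum_plus. unfold mid.
    rewrite (rsum_kronecker_l N a (fun l => F l b - E l b)) by exact Ha.
    rewrite (rsum_kronecker_r N b (fun l => E a l - F a l)) by exact Hb. ring. }
  assert (Ht2 : t ^ 2 * (mmul N X Y a b - mmul N Y X a b) = - rsum N rest).
  { transitivity (rsum N (fun l => cm l - rest l)).
    - unfold mmul. rewrite <- rsum_minus, <- rsum_mult_l. apply rsum_ext. intros.
      unfold cm, rest. ring.
    - rewrite rsum_minus, Hcomm. ring. }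
  rewrite <- (Rabs_pos_eq (t ^ 2)) by apply pow2_ge_0. rewrite <- Rabs_mult, Ht2, Rabs_Ropp.
  eapply Rle_trans; [apply rsum_Rabs|]. rewrite <- rsum_const. apply rsum_le. intros l Hl.
  unfold rest.
  destruct (HXY a l Ha Hl) as [Xal Yal], (HXY l b Hl Hb) as [Xlb Ylb].
  destruct (HEF2 a l Ha Hl) as [eal fal], (HEF2 l b Hl Hb) as [elb flb].
  fold (e a l) (f a l) (e l b) (f l b) in *.
  assert (Htz : forall z, Rabs z <= mu -> Rabs (t * z) <= t * mu).
  { intros z Hz. rewrite Rabs_mult, Rabs_pos_eq by exact Ht. apply Rmult_le_compat_l; assumption. }
  pose proof (Rabs_mult_le _ _ _ _ (Htz _ Xal) flb).
  pose proof (Rabs_mult_le _ _ _ _ (Htz _ Ylb) eal).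
  pose proof (Rabs_mult_le _ _ _ _ (Htz _ Yal) elb).
  pose proof (Rabs_mult_le _ _ _ _ (Htz _ Xlb) fal).
  pose proof (Rabs_mult_le _ _ _ _ eal flb).
  pose proof (Rabs_mult_le _ _ _ _ fal elb).
  unfold Rminus. eapply Rle_trans; [apply Rabs_triang|]. rewrite Rabs_Ropp.
  pose proof (Rabs_triang (t * X a l * f l b + t * Y l b * e a l) (e a l * f l b)).
  pose proof (Rabs_triang (t * X a l * f l b) (t * Y l b * e a l)).
  pose proof (Rabs_triang (t * Y a l * e l b + t * X l b * f a l) (f a l * e l b)).
  pose proof (Rabs_triang (t * Y a l * e l b) (t * X l b * f a l)).
  lra.
Qed.

Lemma eq0_of_Rabs_le_linear D t0 K :
  t0 > 0 -> (forall t, 0 < t <= t0 -> Rabs D <= t * K) -> D = 0.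
Proof.
  intros Ht0 H. destruct (Req_dec D 0) as [|HD]; [assumption|]. exfalso.
  assert (hD : Rabs D > 0) by (apply Rabs_pos_lt, HD).
  assert (HK : 0 <= K) by (specialize (H t0 ltac:(lra)); pose proof (Rabs_pos D); nra).
  set (t := Rmin t0 (Rabs D / (2 * (K + 1)))).
  assert (0 < Rabs D / (2 * (K + 1))) by (apply Rdiv_lt_0_compat; lra).
  assert (0 < t) by (apply Rmin_glb_lt; lra).
  assert (t <= t0) by apply Rmin_l. assert (t <= Rabs D / (2 * (K + 1))) by apply Rmin_r.
  specialize (H t ltac:(lra)).
  assert (t * K <= Rabs D / (2 * (K + 1)) * K) by (apply Rmult_le_compat_r; lra).
  assert (Rabs D / (2 * (K + 1)) * K < Rabs D).
  { apply (Rmult_lt_reg_l (2 * (K + 1))); [lra|]. field_simplify; nra. }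
  lra.
Qed.

Lemma lie_commute N G X Y :
  commutative_group N G -> lie N G X -> lie N G Y -> meq N (mmul N X Y) (mmul N Y X).
Proof.
  intros HG HX HY a b Ha Hb.
  set (mu := mnorm1 N X + mnorm1 N Y + 1).
  pose proof (mnorm1_nonneg N X). pose proof (mnorm1_nonneg N Y).
  assert (Hmu : 1 <= mu) by (unfold mu; lra).
  apply Rminus_diag_uniq.
  apply (eq0_of_Rabs_le_linear _ (Rmin 1 (/ (2 * mu))) (8 * INR N * (mu ^ 3 + mu ^ 4))).
  { apply Rmin_glb_lt; [lra|apply Rinv_0_lt_compat; lra]. }
  intros t [Ht0 Ht].
  assert (Ht1 : t <= 1) by (eapply Rle_trans; [exact Ht|apply Rmin_l]).
  assert (Htmu : t * mu <= / 2).
  { apply Rle_trans with (/ (2 * mu) * mu).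
    - apply Rmult_le_compat_r; [lra|]. eapply Rle_trans; [exact Ht|apply Rmin_r].
    - right. field. lra. }
  destruct (HX t) as [E [HE GE]]. destruct (HY t) as [F [HF GF]].
  set (rho := 2 * (t * mu) ^ 2).
  pose proof (commutator_second_order N X Y E F t mu rho a b Ha Hb ltac:(lra) (HG E F GE GF))
    as Hcomm.
  assert (Hrho : t ^ 2 * Rabs (mmul N X Y a b - mmul N Y X a b)
                 <= INR N * (4 * t * mu * rho + 2 * (rho * rho))).
  { apply Hcomm.
    - intros i j Hi Hj. pose proof (Rabs_entry_le_mnorm1 N X i j Hi Hj).
      pose proof (Rabs_entry_le_mnorm1 N Y i j Hi Hj). unfold mu. lra.
    - intros i j Hi Hj. unfold rho.
      split; apply (mexp_second_order N); unfold mu in *; try lra; assumption. }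
  apply (Rmult_le_reg_l (t ^ 2)); [apply pow_lt; lra|].
  eapply Rle_trans; [exact Hrho|].
  assert (0 <= INR N) by apply pos_INR.
  assert (0 <= INR N * mu ^ 4 * t ^ 3 * (1 - t))
    by (repeat apply Rmult_le_pos; try lra; apply pow_le; lra).
  unfold rho. nra.
Qed.

Definition strictly_increasing (sg : nat -> nat) : Prop := forall k, (sg k < sg (S k))%nat.

Lemma strictly_increasing_le sg : strictly_increasing sg -> forall j k, (j <= k)%nat -> (sg j <= sg k)%nat.
Proof. intros H j k Hjk. induction Hjk; [lia|]. specialize (H m). lia. Qed.

Lemma strictly_increasing_ge_id sg : strictly_increasing sg -> forall k, (k <= sg k)%nat.
Proof. intros H k. induction k; [lia|]. specialize (H k). lia. Qed.

Lemma strictly_increasing_comp sg tau :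
  strictly_increasing sg -> strictly_increasing tau -> strictly_increasing (fun k => sg (tau k)).
Proof.
  intros Hsg Htau k. specialize (Htau k).
  pose proof (strictly_increasing_le sg Hsg (S (tau k)) (tau (S k)) Htau).
  specialize (Hsg (tau k)). lia.
Qed.

Lemma Un_cv_subseq u l sg : strictly_increasing sg -> Un_cv u l -> Un_cv (fun k => u (sg k)) l.
Proof.
  intros Hsg Hu eps He. destruct (Hu eps He) as [K HK]. exists K. intros k Hk.
  apply HK. pose proof (strictly_increasing_ge_id sg Hsg k). lia.
Qed.

Lemma Un_cv_const c : Un_cv (fun _ => c) c.
Proof. intros eps He. exists O. intros. unfold Rdist. rewrite Rminus_diag, Rabs_R0. lra. Qed.

Lemma bounded_subseq_cv (u : nat -> R) : (forall k, Rabs (u k) <= 1) ->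
  exists l sg, strictly_increasing sg /\ Un_cv (fun k => u (sg k)) l.
Proof.
  intros Hu.
  destruct (Bolzano_Weierstrass u (fun c => -1 <= c <= 1) (compact_P3 (-1) 1)) as [l Hl].
  { intros k. specialize (Hu k). unfold Rabs in Hu. destruct (Rcase_abs (u k)); lra. }
  assert (Hpick : forall p : nat * nat, exists q,
             (fst p <= q)%nat /\ Rabs (u q - l) < / (INR (snd p) + 1)).
  { intros [m0 k]. simpl.
    assert (hp : 0 < / (INR k + 1)) by (apply Rinv_0_lt_compat; pose proof (pos_INR k); lra).
    destruct (Hl (disc l (mkposreal _ hp)) m0) as [q [Hq1 Hq2]].
    { exists (mkposreal _ hp). intros y Hy. exact Hy. }
    exists q. split; [exact Hq1|exact Hq2]. }
  destruct (choice _ Hpick) as [g Hg].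
  set (sg := fix sg k := match k with O => g (O, O) | S k' => g (S (sg k'), S k') end).
  exists l, sg. split.
  - intros k. change (sg (S k)) with (g (S (sg k), S k)).
    destruct (Hg (S (sg k), S k)) as [H _]. simpl in H. lia.
  - intros eps He.
    destruct (INR_unbounded (/ eps)) as [K HK]. exists K. intros k Hk.
    unfold Rdist. apply Rlt_trans with (/ (INR k + 1)).
    + destruct k; [apply (Hg (O, O))|apply (Hg (S (sg k), S k))].
    + assert (0 < / eps) by (apply Rinv_0_lt_compat, He).
      apply le_INR in Hk.
      rewrite <- (Rinv_inv eps). apply Rinv_lt_contravar; [apply Rmult_lt_0_compat|]; lra.
Qed.

Lemma bounded_subseq_cv_vec n (u : nat -> nat -> R) :
  (forall k i, (i < n)%nat -> Rabs (u k i) <= 1) ->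
  exists (l : nat -> R) sg, strictly_increasing sg /\
    forall i, (i < n)%nat -> Un_cv (fun k => u (sg k) i) (l i).
Proof.
  induction n; intros Hu.
  - exists (fun _ => 0), (fun k => k). split; [intros k; lia|]. intros; lia.
  - destruct IHn as [l [sg [Hsg Hl]]]; [intros; apply Hu; lia|].
    destruct (bounded_subseq_cv (fun k => u (sg k) n)) as [l' [tau [Htau Hl']]];
      [intros; apply Hu; lia|].
    exists (fun i => if Nat.eqb i n then l' else l i), (fun k => sg (tau k)).
    split; [apply strictly_increasing_comp; assumption|].
    intros i Hi. destruct (Nat.eqb_spec i n) as [->|Hne]; [exact Hl'|].
    apply (Un_cv_subseq (fun k => u (sg k) i)); [exact Htau|]. apply Hl. lia.
Qed.

Lemma rsum_sqr_dist_cv n (u : nat -> nat -> R) l :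
  (forall i, (i < n)%nat -> Un_cv (fun k => u k i) (l i)) ->
  Un_cv (fun k => rsum n (fun i => (u k i - l i) * (u k i - l i))) 0.
Proof.
  intros Hu. rewrite <- (rsum_0 n).
  rewrite <- (rsum_ext n (fun i => (l i - l i) * (l i - l i))) by (intros; ring).
  apply (rsum_cv n (fun k i => (u k i - l i) * (u k i - l i))). intros i Hi.
  apply CV_mult; apply CV_minus; try apply Hu; try apply Un_cv_const; exact Hi.
Qed.

Lemma rsum_sqr_limit n (u : nat -> nat -> R) l c :
  (forall i, (i < n)%nat -> Un_cv (fun k => u k i) (l i)) ->
  (forall k, rsum n (fun i => u k i * u k i) = c) -> rsum n (fun i => l i * l i) = c.
Proof.
  intros Hu Hc. apply (UL_sequence (fun k => rsum n (fun i => u k i * u k i))).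
  - apply (rsum_cv n (fun k i => u k i * u k i)). intros i Hi. apply CV_mult; apply Hu, Hi.
  - intros e He. exists O. intros k _. unfold Rdist. rewrite Hc, Rminus_diag, Rabs_R0. exact He.
Qed.

(** * The gradient inequality *)

Definition qform N (Xs : nat -> mat) (x : vec) (i : nat) : R := vip N (mapply N (Xs i) x) x.

Definition grad_quarter N n (Xs : nat -> mat) (x : vec) : vec :=
  mapply N (lincomb n (qform N Xs x) Xs) x.

Lemma phi_qform N n Xs x : phi N n Xs x = rsum n (fun i => qform N Xs x i * qform N Xs x i).
Proof. apply rsum_ext. intros. unfold qform. ring. Qed.

Lemma phi_nonneg N n Xs x : 0 <= phi N n Xs x.
Proof. rewrite phi_qform. apply rsum_nonneg. intros. apply Rle_0_sqr. Qed.

Lemma qform_scal N Xs t x i : qform N Xs (fun b => t * x b) i = t ^ 2 * qform N Xs x i.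
Proof.
  unfold qform, vip. rewrite <- rsum_mult_l. apply rsum_ext. intros.
  rewrite mapply_scal. ring.
Qed.

Lemma grad_quarter_scal N n Xs t x a :
  grad_quarter N n Xs (fun b => t * x b) a = t ^ 3 * grad_quarter N n Xs x a.
Proof.
  unfold grad_quarter. rewrite !mapply_lincomb, <- rsum_mult_l. apply rsum_ext. intros.
  rewrite qform_scal, mapply_scal. ring.
Qed.

Lemma grad_phi_quarter N n Xs x a : grad_phi N n Xs x a = 4 * grad_quarter N n Xs x a.
Proof. unfold grad_quarter. rewrite mapply_lincomb. reflexivity. Qed.

Lemma vip_lincomb_qform N n c Xs x :
  vip N (mapply N (lincomb n c Xs) x) x = rsum n (fun i => c i * qform N Xs x i).
Proof.
  rewrite (vip_ext N _ (fun a => rsum n (fun i => c i * mapply N (Xs i) x a)) x x)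
    by (intros; try apply mapply_lincomb; reflexivity).
  apply vip_rsum_l.
Qed.

Lemma mnorm2_lincomb_sub_le N n c d Xs :
  mnorm2 N (msub (lincomb n c Xs) (lincomb n d Xs)) <=
  rsum n (fun i => (c i - d i) * (c i - d i)) * rsum n (fun i => mnorm2 N (Xs i)).
Proof.
  unfold mnorm2 at 2.
  rewrite (rsum_swap n N), <- rsum_mult_l. apply rsum_le. intros p _.
  rewrite (rsum_swap n N), <- rsum_mult_l. apply rsum_le. intros q _.
  unfold msub, lincomb. rewrite <- rsum_minus.
  pose proof (rsum_Cauchy_Schwarz n (fun i => c i - d i) (fun i => Xs i p q)).
  rewrite (rsum_ext n _ (fun i => (c i - d i) * Xs i p q)) by (intros; ring).
  simpl in *. lra.
Qed.

(* Homogeneity: [phi (t x) = t^4 phi x] and [grad_quarter (t x) = t^3 grad_quarter x]. *)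
Lemma phi_cube_le_of_sphere N n Xs K : K > 0 ->
  (forall y, phi N n Xs y = 1 -> 1 <= K * vnorm2 N (grad_quarter N n Xs y) ^ 2) ->
  forall x, phi N n Xs x ^ 3 <= K * vnorm2 N (grad_quarter N n Xs x) ^ 2.
Proof.
  intros HK Hsphere x.
  pose proof (phi_nonneg N n Xs x) as Hph.
  pose proof (vnorm2_nonneg N (grad_quarter N n Xs x)) as Hq.
  set (ph := phi N n Xs x) in *. set (q := vnorm2 N (grad_quarter N n Xs x)) in *.
  destruct (Req_dec ph 0) as [E0|Hph0].
  { rewrite E0. assert (0 <= K * q ^ 2) by (apply Rmult_le_pos; [lra|apply pow2_ge_0]). simpl. lra. }
  set (s := sqrt (sqrt ph)).
  assert (Hs : 0 < s) by (apply sqrt_lt_R0, sqrt_lt_R0; lra).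
  assert (Hs4 : s ^ 4 = ph).
  { unfold s. replace 4%nat with (2 * 2)%nat by lia. rewrite pow_mult, !pow2_sqrt; [reflexivity|lra|].
    apply sqrt_pos. }
  assert (Hphi : phi N n Xs (fun b => / s * x b) = 1).
  { rewrite phi_qform.
    rewrite (rsum_ext n _ (fun i => (/ s) ^ 4 * (qform N Xs x i * qform N Xs x i)))
      by (intros; rewrite qform_scal; ring).
    rewrite rsum_mult_l, <- phi_qform. fold ph. rewrite <- Hs4. field. lra. }
  assert (Hgrad : vnorm2 N (grad_quarter N n Xs (fun b => / s * x b)) = ((/ s) ^ 3) ^ 2 * q).
  { unfold q. rewrite <- vnorm2_scal. apply vip_ext; intros; apply grad_quarter_scal. }
  specialize (Hsphere _ Hphi). rewrite Hgrad in Hsphere.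
  rewrite <- Hs4.
  apply (Rmult_le_reg_l ((/ s) ^ 12)); [apply pow_lt, Rinv_0_lt_compat, Hs|].
  replace ((/ s) ^ 12 * (s ^ 4) ^ 3) with 1 by (field; lra).
  replace ((/ s) ^ 12 * (K * q ^ 2)) with (K * (((/ s) ^ 3) ^ 2 * q) ^ 2) by ring.
  exact Hsphere.
Qed.

Section CommutingSymmetric.
Variables (N n : nat) (Xs : nat -> mat).
Hypothesis Hsym : forall i, (i < n)%nat -> msym N (Xs i).
Hypothesis Hcom : forall i j, (i < n)%nat -> (j < n)%nat -> commutes N (Xs i) (Xs j).

Lemma lincomb_msym c : msym N (lincomb n c Xs).
Proof.
  intros p q Hp Hq. unfold mtr, lincomb. apply rsum_ext. intros i Hi.
  rewrite <- (Hsym i Hi q p Hq Hp). reflexivity.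
Qed.

Lemma lincomb_commutes c d : commutes N (lincomb n c Xs) (lincomb n d Xs).
Proof.
  intros x a Ha.
  assert (E : forall c d, mapply N (lincomb n c Xs) (mapply N (lincomb n d Xs) x) a =
    rsum n (fun i => rsum n (fun j => c i * d j * mapply N (Xs i) (mapply N (Xs j) x) a))).
  { intros c' d'. rewrite mapply_lincomb. apply rsum_ext. intros i _.
    rewrite (mapply_ext N (Xs i) _ _ (fun b _ => mapply_lincomb N n d' Xs x b)).
    rewrite mapply_rsum, <- rsum_mult_l.
    apply rsum_ext. intros. rewrite Rmult_assoc. reflexivity. }
  rewrite !E, rsum_swap. apply rsum_ext. intros j Hj. apply rsum_ext. intros i Hi.
  rewrite Hcom by assumption. ring.
Qed.

(* Near a point [l] of the unit sphere of coefficients, [T = sum_i l_i X_i] is fixed and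
   [S = sum_i qform y i X_i] is a small commuting perturbation of it. *)
Lemma local_sphere_bound l : rsum n (fun i => l i * l i) = 1 ->
  exists eps K, eps > 0 /\ K > 0 /\ forall y,
    phi N n Xs y = 1 -> rsum n (fun i => (qform N Xs y i - l i) * (qform N Xs y i - l i)) <= eps ->
    1 <= K * vnorm2 N (grad_quarter N n Xs y) ^ 2.
Proof.
  intros Hl.
  destruct (quadratic_form_perturbation N (lincomb n l Xs) (lincomb_msym l)) as [del [K [Hdel [HK Hpert]]]].
  set (FX := rsum n (fun i => mnorm2 N (Xs i))).
  assert (HFX : 0 <= FX) by (apply rsum_nonneg; intros; apply mnorm2_nonneg).
  exists (Rmin 1 (del / (FX + 1))), (4 * K * K). split; [|split].
  - apply Rmin_glb_lt; [lra|apply Rdiv_lt_0_compat; lra].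
  - nra.
  - intros y Hy Hclose.
    set (a := qform N Xs y) in *.
    set (r := rsum n (fun i => (a i - l i) * (a i - l i))) in *.
    assert (Hr0 : 0 <= r) by (apply rsum_nonneg; intros; apply Rle_0_sqr).
    assert (Hr1 : r <= 1) by (eapply Rle_trans; [exact Hclose|apply Rmin_l]).
    assert (Hrdel : r * FX <= del).
    { apply Rle_trans with (del / (FX + 1) * FX).
      - apply Rmult_le_compat_r; [exact HFX|]. eapply Rle_trans; [exact Hclose|apply Rmin_r].
      - apply (Rmult_le_reg_l (FX + 1)); [lra|]. field_simplify; [|lra].
        assert (0 <= del * FX) by (apply Rmult_le_pos; lra). lra. }
    assert (Hla : rsum n (fun i => l i * a i) = 1 - r / 2).
    { rewrite phi_qform in Hy. fold a in Hy.
      assert (E : r = rsum n (fun i => a i * a i) + rsum n (fun i => l i * l i)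
                      - 2 * rsum n (fun i => l i * a i)).
      { unfold r. rewrite <- rsum_mult_l, <- rsum_plus, <- rsum_minus.
        apply rsum_ext. intros. ring. }
      rewrite Hy, Hl in E. lra. }
    pose proof (Hpert (lincomb n a Xs) (lincomb_commutes a l)
                  (Rle_trans _ _ _ (mnorm2_lincomb_sub_le N n a l Xs) Hrdel) y) as Hq.
    rewrite vip_lincomb_qform in Hq. fold a in Hq. rewrite Hla in Hq.
    change (mapply N (lincomb n a Xs) y) with (grad_quarter N n Xs y) in Hq.
    assert (1 <= 2 * K * vnorm2 N (grad_quarter N n Xs y)) by lra.
    nra.
Qed.

Lemma sphere_bound : exists K, K > 0 /\
  forall y, phi N n Xs y = 1 -> 1 <= K * vnorm2 N (grad_quarter N n Xs y) ^ 2.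
Proof.
  apply NNPP. intros Hno.
  assert (Hbad : forall m : nat, exists y,
             phi N n Xs y = 1 /\ (INR m + 1) * vnorm2 N (grad_quarter N n Xs y) ^ 2 < 1).
  { intros m. apply NNPP. intros Hm. apply Hno. exists (INR m + 1).
    split; [pose proof (pos_INR m); lra|]. intros y Hy.
    apply Rnot_lt_le. intros Hlt. apply Hm. exists y. split; assumption. }
  destruct (choice _ Hbad) as [ys Hys].
  set (am := fun m i => qform N Xs (ys m) i).
  assert (Hsum : forall m, rsum n (fun i => am m i * am m i) = 1).
  { intros m. unfold am. rewrite <- phi_qform. apply Hys. }
  assert (Hbound : forall m i, (i < n)%nat -> Rabs (am m i) <= 1).
  { intros m i Hi.
    assert (am m i * am m i <= 1).
    { rewrite <- (Hsum m). apply (rsum_ge_term n (fun i => am m i * am m i)); [|exact Hi].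
      intros. apply Rle_0_sqr. }
    rewrite <- Rabs_R1. apply Rsqr_le_abs_0. unfold Rsqr. lra. }
  destruct (bounded_subseq_cv_vec n am Hbound) as [l [sg [Hsg Hl]]].
  pose proof (rsum_sqr_limit n (fun k => am (sg k)) l 1 Hl (fun k => Hsum (sg k))) as Hl1.
  pose proof (rsum_sqr_dist_cv n (fun k => am (sg k)) l Hl) as Hdist.
  destruct (local_sphere_bound l Hl1) as [eps [K [Heps [HK Hloc]]]].
  destruct (Hdist eps Heps) as [k1 Hk1].
  destruct (INR_unbounded K) as [k2 Hk2].
  set (k := (k1 + k2)%nat).
  specialize (Hk1 k ltac:(unfold k; lia)). unfold Rdist in Hk1. rewrite Rminus_0_r in Hk1.
  apply Rabs_def2 in Hk1. destruct Hk1 as [Hk1 _].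
  destruct (Hys (sg k)) as [Hphi Hsmall].
  pose proof (Hloc (ys (sg k)) Hphi ltac:(unfold am in Hk1; lra)) as Hlarge.
  assert (INR k2 <= INR (sg k)).
  { apply le_INR. pose proof (strictly_increasing_ge_id sg Hsg k). unfold k in *. lia. }
  pose proof (pow2_ge_0 (vnorm2 N (grad_quarter N n Xs (ys (sg k))))).
  nra.
Qed.

Lemma phi_cube_le : exists K, K > 0 /\
  forall x, phi N n Xs x ^ 3 <= K * vnorm2 N (grad_quarter N n Xs x) ^ 2.
Proof.
  destruct sphere_bound as [K [HK Hsphere]].
  exists K. split; [exact HK|]. apply phi_cube_le_of_sphere; assumption.
Qed.

End CommutingSymmetric.

Lemma vnorm_grad_phi_pow4 N n Xs x :
  vnorm N (grad_phi N n Xs x) ^ 4 = 256 * vnorm2 N (grad_quarter N n Xs x) ^ 2.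
Proof.
  assert (E : vip N (grad_phi N n Xs x) (grad_phi N n Xs x) = 4 ^ 2 * vnorm2 N (grad_quarter N n Xs x)).
  { rewrite <- vnorm2_scal. apply vip_ext; intros; apply grad_phi_quarter. }
  pose proof (vnorm2_nonneg N (grad_quarter N n Xs x)).
  unfold vnorm. rewrite E. replace 4%nat with (2 * 2)%nat by lia.
  rewrite pow_mult, pow2_sqrt by nra. ring.
Qed.

Lemma Rpower_cube_root_bound ph g K : 0 <= ph -> 0 <= g -> K > 0 -> ph ^ 3 <= K * g ^ 4 ->
  ph <= Rpower K (/ 3) * powr g (4 / 3).
Proof.
  intros Hph Hg HK Hle.
  assert (HC : 0 < Rpower K (/ 3)) by apply exp_pos.
  unfold powr. destruct (Rle_dec g 0) as [Hg0|Hg0].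
  - assert (g = 0) by lra. subst g.
    assert (ph ^ 3 <= 0) by (simpl in Hle; lra).
    destruct (Req_dec ph 0) as [->|Hne]; [lra|].
    assert (0 < ph ^ 3) by (apply pow_lt; lra). lra.
  - destruct (Req_dec ph 0) as [->|Hne].
    { assert (0 < Rpower g (4 / 3)) by apply exp_pos. nra. }
    assert (Hcube : ph = Rpower (ph ^ 3) (/ 3)).
    { rewrite <- (Rpower_pow 3 ph), Rpower_mult by lra.
      replace (INR 3 * / 3) with 1 by (simpl; field). rewrite Rpower_1; lra. }
    assert (Hroot : Rpower (K * g ^ 4) (/ 3) = Rpower K (/ 3) * Rpower g (4 / 3)).
    { rewrite <- Rpower_mult_distr by (try apply pow_lt; lra). f_equal.
      rewrite <- (Rpower_pow 4 g), Rpower_mult by lra. f_equal. simpl. field. }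
    rewrite Hcube, <- Hroot. apply Rle_Rpower_l; [left; apply Rinv_0_lt_compat; lra|].
    split; [apply pow_lt; lra|exact Hle].
Qed.

Theorem mainTheorem19 (N : nat) (G : mat -> Prop)
  (HG : closed_subgroup_GL N G) (Htr : transpose_invariant G)
  (Hcomm : commutative_group N G)
  (n : nat) (Xs : nat -> mat) (Hbasis : orthonormal_basis N G n Xs) :
  exists C : R, C > 0 /\
    forall x : vec, C * powr (vnorm N (grad_phi N n Xs x)) (4 / 3) >= phi N n Xs x.
Proof.
  destruct Hbasis as [Hp _].
  assert (Hsym : forall i, (i < n)%nat -> msym N (Xs i)) by (intros i Hi; apply (Hp i Hi)).
  assert (Hcom : forall i j, (i < n)%nat -> (j < n)%nat -> commutes N (Xs i) (Xs j)).
  { intros i j Hi Hj. apply commutes_of_meq, (lie_commute N G); [exact Hcomm|apply Hp..]; assumption. }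
  destruct (phi_cube_le N n Xs Hsym Hcom) as [K [HK Hcube]].
  exists (Rpower (K / 256) (/ 3)). split; [apply exp_pos|]. intros x.
  apply Rle_ge, Rpower_cube_root_bound.
  - apply phi_nonneg.
  - apply sqrt_pos.
  - lra.
  - rewrite vnorm_grad_phi_pow4. specialize (Hcube x). lra.
Qed.
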